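(* Assume (H) and (U), and the stationary case. Let $x>0$ and let $a_x\in[-x/\bar z,x/\underline z]$ be a maximizer in $v(x)=\sup_{a\in[-x/\bar z,x/\underline z]}\hat v(x,a)$. Then $D^+v(x)\subseteq D^+_x\hat v(x,a_x)$, where $D^+_x\hat v(x,a_x)$ denotes the superdifferential of the function $y\mapsto\hat v(y,a_x)$ on $[l(a_x),\infty)$ at the point $x$.
   Context: Standing setup. Fix constants $\lambda>0$, $\rho>0$. On a filtered probability space $(\Omega,\mathcal F,(\mathcal F_t)_{t\ge0},\mathbb P)$ let $0=\tau_0<\tau_1<\tau_2<\cdots$ be random times and $(Z_k)_{k\ge1}$ random variables with values in $(-1,\infty)$. Assumption (H): (a) $(\tau_k)_{k\ge1}$ are the jump times of a Poisson process with intensity $\lambda$; (b) for each $k\ge1$, conditionally on $\tau_k-\tau_{k-1}=t$, $Z_k$ is independent of $\{\tau_i,Z_i\}_{i<k}$ and has law $p(t,dz)$, where for every $t\ge0$ the support of $p(t,dz)$ is either an interval with interior $(-\underline z,\bar z)$ or a finite set with smallest element $-\underline z$ and largest element $\bar z$, with $\underline z\in(0,1]$, $\bar z\in(0,\infty]$ ($\bar z<\infty$ in the finite case); (c) $\int z\,p(t,dz)\ge 0$ and $\int(1+z)\,p(t,dz)\le k e^{bt}$ for all $t\ge0$, for some constants $k,b\ge0$; (d) $t\mapsto\int w(z)\,p(t,dz)$ is continuous on $[0,\infty)$ for every measurable $w$ on $(-\underline z,\bar z)$ with linear growth. Assumption (U): $U:[0,\infty)\to\mathbb R$ is strictly increasing,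 strictly concave, $C^1$ on $(0,\infty)$, $U(0)=0$, $U'(0^+)=+\infty$, $U'(+\infty)=0$, $U(x)\le K_1x^\gamma$ for all $x\ge0$ for some $K_1>0$, $\gamma\in(0,1)$, and $\rho>b\gamma+\lambda(k^\gamma\underline z^{-\gamma}-1)$. Original problem: $\mathcal G_t=\sigma\{(\tau_k,Z_k):\tau_k\le t\}$. A control $(\alpha,c)$ consists of real $\alpha_k$, $k\ge1$, with $\alpha_k$ $\mathcal G_{\tau_{k-1}}$-measurable, and a nonnegative $(\mathcal G_t)$-predictable process $c$. For $x\ge0$ the wealth is $X^x_0=x$, $X^x_k=x-\int_0^{\tau_k}c_t\,dt+\sum_{i=1}^k\alpha_iZ_i$; $(\alpha,c)\in\mathcal A(x)$ if $X^x_k\ge0$ a.s. for all $k\ge1$. $v(x)=\sup_{(\alpha,c)\in\mathcal A(x)}\mathbb E\int_0^\infty e^{-\rho t}U(c_t)\,dt$. Auxiliary problem: $l(a)=\max(a\underline z,-a\bar z)$ (with $l(a)=a\underline z$ if $\bar z=\infty$); $A=\mathbb R$ if $\bar z<\infty$ and $A=[0,\infty)$ if $\bar z=\infty$; $\mathcal X=\{(x,a)\in[0,\infty)\times A: x\ge l(a)\}$, $\mathcal D=[0,\infty)\times\mathcal X$; $g(t,x,a)=\lambda\int v(x+az)\,p(t,dz)$. For $(t,x,a)\in\mathcal D$, $\mathcal C_a(t,x)$ is the set of deterministic measurable $c:[t,\infty)\to[0,\infty)$ with $\int_t^s c_u\,du\le x-l(a)$ for all $s\ge t$, with state $Y_s=x-\int_t^s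 c_u\,du$; $\hat v(t,x,a)=\sup_{c\in\mathcal C_a(t,x)}\int_t^\infty e^{-(\rho+\lambda)(s-t)}[U(c_s)+g(s,Y_s,a)]\,ds$. It is known that $v(x)=\sup_{a\in[-x/\bar z,\,x/\underline z]}\hat v(0,x,a)$ (with $-x/\bar z:=0$ if $\bar z=\infty$). Stationary case: $p(t,dz)=p(dz)$ does not depend on $t$; then $g$ and $\hat v$ do not depend on $t$ and are written $g(x,a)$, $\hat v(x,a)$. Superdifferential: for a continuous real function $u$ on a set $S\subset\mathbb R^n$ and $y\in S$, $D^+u(y)=\{p\in\mathbb R^n:\limsup_{z\in S,z\to y}\frac{u(z)-u(y)-\langle p,z-y\rangle}{|z-y|}\le0\}$. *)

From Stdlib Require Import Reals Lra.
Open Scope R_scope.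

(* Upper end of the support: [Some b] means zbar = b < oo, [None] means zbar = +oo. *)
Definition zbar_t := option R.

Definition lfun (zu : R) (zb : zbar_t) (a : R) : R :=
  match zb with
  | Some b => Rmax (a * zu) (- a * b)
  | None => a * zu
  end.

(* a in [-x/zbar, x/zunder], with -x/zbar := 0 when zbar = oo. *)
Definition admissible (zu : R) (zb : zbar_t) (x a : R) : Prop :=
  match zb with
  | Some b => - x / b <= a <= x / zu
  | None => 0 <= a <= x / zu
  end.

(* One-dimensional superdifferential of u on the set S at y:
   p in D^+u(y) iff limsup_{z in S, z -> y} (u z - u y - p (z - y)) / |z - y| <= 0. *)
Definition superdiff (S : R -> Prop) (u : R -> R) (y p : R) : Prop :=
  forall eps : R, 0 < eps -> exists delta : R, 0 < delta /\
    forall z : R, S z -> 0 < Rabs (z - y) < delta ->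
      u z - u y - p * (z - y) <= eps * Rabs (z - y).

(* Write u(y) = vhat(y, ax).  Two facts suffice:
   - u lies below v on the domain [l(ax), oo) of u: every y >= l(ax) is
     nonnegative and ax is an admissible exposure at wealth y, so vhat(y, ax)
     is one of the candidates in the supremum defining v(y);
   - u touches v at x, because ax is a maximizer there.
   A function touching another one from below at a point inherits all its
   superdifferentials, on any smaller domain (lemma superdiff_of_touching_below).
   The file first establishes the domain facts about l and admissibility, then
   the comparison of u with v, then the general touching lemma, and finally
   derives the theorem by combining them. *)

From Stdlib Require Import Reals Lra.
Open Scope R_scope.

Lemma Rle_div_of_mult (c a y : R) : 0 < c -> a * c <= y -> a <= y / c.
Proof.
  intros Hc Hay.
  apply (Rmult_le_reg_r c); [exact Hc |].
  unfold Rdiv; rewrite Rmult_assoc, Rinv_l by lra; lra.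
Qed.

(* Above the constraint level l(a), an exposure a admissible at some wealth
   stays admissible; admissibility at x is only needed for the sign a >= 0
   when zbar = oo. *)
Lemma admissible_above_lfun (zu : R) (zb : zbar_t) (hzu : 0 < zu)
  (hzb : match zb with Some b => 0 < b | None => True end) (x a y : R) :
  admissible zu zb x a -> lfun zu zb a <= y -> admissible zu zb y a.
Proof.
  destruct zb as [b|]; simpl; intros Hadm Hl.
  - pose proof (Rmax_l (a * zu) (- a * b)) as Hzu_part.
    pose proof (Rmax_r (a * zu) (- a * b)) as Hzb_part.
    split.
    + replace (- y / b) with (- (y / b)) by (unfold Rdiv; ring).
      apply Ropp_le_cancel; rewrite Ropp_involutive.
      apply Rle_div_of_mult; lra.
    + apply Rle_div_of_mult; lra.
  - split; [lra |]. apply Rle_div_of_mult; lra.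
Qed.

Lemma admissible_wealth_nonneg (zu : R) (zb : zbar_t) (hzu : 0 < zu)
  (hzb : match zb with Some b => 0 < b | None => True end) (y a : R) :
  admissible zu zb y a -> 0 <= y.
Proof.
  destruct zb as [b|]; simpl; intros [Hlo Hhi].
  - assert (Hsum : 0 <= y / zu + y / b) by lra.
    replace (y / zu + y / b) with (y * (/ zu + / b)) in Hsum
      by (unfold Rdiv; ring).
    assert (0 < / zu + / b) by (pose proof (Rinv_0_lt_compat zu hzu);
                                pose proof (Rinv_0_lt_compat b hzb); lra).
    nra.
  - assert (0 <= y / zu) by lra.
    replace y with (y / zu * zu) by (field; lra). nra.
Qed.

Lemma value_dominates_candidate (zu : R) (zb : zbar_t)
  (v : R -> R) (vhat : R -> R -> R) (y a : R) :
  is_lub (fun r => exists a, admissible zu zb y a /\ r = vhat y a) (v y) ->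
  admissible zu zb y a -> vhat y a <= v y.
Proof.
  intros [Hupper _] Hadm. apply Hupper. exists a. split; [exact Hadm | reflexivity].
Qed.

Lemma superdiff_of_touching_below (S S' : R -> Prop) (u w : R -> R) (y p : R) :
  (forall z, S' z -> S z) -> (forall z, S' z -> u z <= w z) -> u y = w y ->
  superdiff S w y p -> superdiff S' u y p.
Proof.
  intros Hsub Hbelow Htouch Hw eps Heps.
  destruct (Hw eps Heps) as [delta [Hdelta Hw_near]].
  exists delta; split; [exact Hdelta |].
  intros z Hz Hdist.
  pose proof (Hbelow z Hz).
  pose proof (Hw_near z (Hsub z Hz) Hdist).
  lra.
Qed.

Theorem lemma4p1
  (zu : R) (zb : zbar_t)
  (hzu : 0 < zu <= 1)
  (hzb : match zb with Some b => 0 < b | None => True end)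
  (v : R -> R) (vhat : R -> R -> R)
  (hrep : forall y : R, 0 <= y ->
     is_lub (fun r => exists a, admissible zu zb y a /\ r = vhat y a) (v y))
  (x ax : R) (hx : 0 < x)
  (hax : admissible zu zb x ax) (hmax : vhat x ax = v x) :
  forall p : R, superdiff (fun y => 0 <= y) v x p ->
    superdiff (fun y => lfun zu zb ax <= y) (fun y => vhat y ax) x p.
Proof.
  intros p Hp.
  assert (Hzu : 0 < zu) by lra.
  assert (Hadm : forall y, lfun zu zb ax <= y -> admissible zu zb y ax)
    by (intros y Hy; exact (admissible_above_lfun zu zb Hzu hzb x ax y hax Hy)).
  apply (superdiff_of_touching_below (fun y => 0 <= y) _ _ v x p);
    [| | exact hmax | exact Hp].
  - intros y Hy. exact (admissible_wealth_nonneg zu zb Hzu hzb y ax (Hadm y Hy)).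
  - intros y Hy. pose proof (Hadm y Hy) as Hy_adm.
    apply value_dominates_candidate with (zu := zu) (zb := zb); [| exact Hy_adm].
    exact (hrep y (admissible_wealth_nonneg zu zb Hzu hzb y ax Hy_adm)).
Qed.
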